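(* Let $\mathfrak g$ be a finite-dimensional complex simple Lie algebra, $\lambda\in P^+$, and $\boldsymbol\lambda=(\lambda_1,\lambda_2),\boldsymbol\mu=(\mu_1,\mu_2)\in P^+(\lambda,2)$ with $\boldsymbol\lambda\prec\boldsymbol\mu$. Suppose there exist $w\in W$ and $i_0\in I$ such that $w(\lambda_1-\lambda_2)\in P^+$ and $$w(\lambda_1-\mu_1)(h_{i_0})\cdot w(\mu_1-\lambda_2)(h_{i_0})>0.$$ Then $(\lambda_1-w^{-1}\omega_{i_0},\ \lambda_2+w^{-1}\omega_{i_0})\in P^+(\lambda,2)$ and $$\boldsymbol\lambda\prec(\lambda_1-w^{-1}\omega_{i_0},\ \lambda_2+w^{-1}\omega_{i_0})\preceq\boldsymbol\mu.$$
   Context: $\mathfrak g$ has simple roots $\alpha_i$ ($i\in I$), fundamental weights $\omega_i$, positive roots $R^+$, coroots $h_\alpha$, $h_i=h_{\alpha_i}$, Weyl group $W$, dominant integral weights $P^+$. $P^+(\lambda,2)=\{(\lambda_1,\lambda_2)\in(P^+)^2:\lambda_1+\lambda_2=\lambda\}$; $(\lambda_1,\lambda_2)\preceq(\mu_1,\mu_2)$ means $\min\{\lambda_1(h_\alpha),\lambda_2(h_\alpha)\}\le\min\{\mu_1(h_\alpha),\mu_2(h_\alpha)\}$ for all $\alpha\in R^+$; $\sim$ means equality of these minima for all $\alpha\in R^+$; $\boldsymbol\lambda\prec\boldsymbol\mu$ means $\boldsymbol\lambda\preceq\boldsymbol\mu$ and not $\boldsymbol\lambda\sim\boldsymbol\mu$.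 *)

(* Combinatorial root datum of a finite-dimensional complex
   simple Lie algebra, encoded by its Cartan matrix. *)
From HB Require Import structures.
From mathcomp Require Import all_boot all_order all_algebra.
Set Implicit Arguments. Unset Strict Implicit. Unset Printing Implicit Defensive.
Import Order.TTheory GRing.Theory Num.Theory.
Local Open Scope ring_scope.

(* Convention: A i j = alpha_j(h_i)  (Kac's convention). *)

(* A is the Cartan matrix of a finite-dimensional complex simple Lie algebra:
   a generalized Cartan matrix that is indecomposable and symmetrizable with
   positive definite symmetrization (Serre / Kac, Ch. 4). *)
Definition finite_simple_cartan (n : nat) (A : 'I_n -> 'I_n -> int) : Prop :=
  (0 < n)%N /\ [/\ (forall i, A i i = 2),
      (forall i j, i != j -> A i j <= 0),
      (forall i j, (A i j == 0) = (A j i == 0)),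
      (forall S : {set 'I_n}, S != set0 -> S != setT ->
          exists i j, [/\ i \in S, j \notin S & A i j != 0]) &
      exists d : 'I_n -> rat,
        [/\ (forall i, 0 < d i),
            (forall i j, d i * (A i j)%:~R = d j * (A j i)%:~R) &
            (forall x : 'I_n -> rat, (exists i, x i != 0) ->
               0 < \sum_i \sum_j x i * d i * (A i j)%:~R * x j)]].

(* Integral weights, written in the basis of fundamental weights:
   lam i = lam(h_i). *)
Definition weight (n : nat) := {ffun 'I_n -> int}.

Definition dominant (n : nat) (lam : weight n) : Prop := forall i, 0 <= lam i.

Definition fund_weight (n : nat) (i : 'I_n) : weight n :=
  [ffun j => if j == i then 1 else 0].

(* simple reflection s_j on weights: s_j(lam) = lam - lam(h_j) alpha_j *)
Definition sref (n : nat) (A : 'I_n -> 'I_n -> int) (j : 'I_n) (lam : weight n)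
  : weight n := [ffun i => lam i - lam j * A i j].

(* Weyl group elements are represented by words w = [:: j1; ...; jk],
   standing for s_{j1} ... s_{jk}; w^{-1} is the reversed word. *)
Definition wact (n : nat) (A : 'I_n -> 'I_n -> int) (w : seq 'I_n) (lam : weight n)
  : weight n := foldr (sref A) lam w.

(* Coroots, written in the basis of simple coroots h_i. *)
Definition coweight (n : nat) := {ffun 'I_n -> int}.

Definition simple_coroot (n : nat) (i : 'I_n) : coweight n :=
  [ffun k => if k == i then 1 else 0].

(* s_j(h) = h - alpha_j(h) h_j *)
Definition sref_co (n : nat) (A : 'I_n -> 'I_n -> int) (j : 'I_n) (h : coweight n)
  : coweight n :=
  [ffun k => h k - (if k == j then \sum_i h i * A i j else 0)].

Definition wact_co (n : nat) (A : 'I_n -> 'I_n -> int) (w : seq 'I_n) (h : coweight n)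
  : coweight n := foldr (sref_co A) h w.

(* h is a coroot h_alpha for some positive root alpha: coroots form the
   W-orbit of the simple coroots, positivity = nonnegative coordinates. *)
Definition pos_coroot (n : nat) (A : 'I_n -> 'I_n -> int) (h : coweight n) : Prop :=
  (exists (w : seq 'I_n) (i : 'I_n), h = wact_co A w (simple_coroot i))
  /\ (forall k, 0 <= h k).

Definition pairing (n : nat) (lam : weight n) (h : coweight n) : int :=
  \sum_i h i * lam i.

Definition inP2 (n : nat) (lam : weight n) (p : weight n * weight n) : Prop :=
  [/\ dominant p.1, dominant p.2 & p.1 + p.2 = lam].

Definition minpair (n : nat) (p : weight n * weight n) (h : coweight n) : int :=
  Num.min (pairing p.1 h) (pairing p.2 h).

Definition preceq (n : nat) (A : 'I_n -> 'I_n -> int) (p q : weight n * weight n)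
  : Prop := forall h, pos_coroot A h -> minpair p h <= minpair q h.

Definition simeq (n : nat) (A : 'I_n -> 'I_n -> int) (p q : weight n * weight n)
  : Prop := forall h, pos_coroot A h -> minpair p h = minpair q h.

Definition prec (n : nat) (A : 'I_n -> 'I_n -> int) (p q : weight n * weight n)
  : Prop := preceq A p q /\ ~ simeq A p q.

(* The root-theoretic input is sign coherence of coroots: for a Cartan matrix
   of finite type every element x(h_j) of the W-orbit of a simple coroot has
   all coordinates >= 0 or all <= 0, i.e. it is ± a positive coroot.  It is
   proved along Humphreys' route: the rank-2 submatrices are of type
   A1 x A1, A2, B2 or G2 (positive definiteness); in such a dihedral group an
   explicit coordinate computation and the braid relation settle the reduced
   {s,t}-words; an induction on length through minimal parabolic
   factorizations x = v u (u in W_{s,t}) gives "l(x s) > l(x) => x(h_s) >= 0",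
   whence sign coherence.

   For the proposition, let X = w(λ1 - μ1) and Y = w(μ1 - λ2).  The hypothesis
   λ ≼ μ says that μ1(g) lies between λ1(g) and λ2(g) on every coroot g, so
   X, Y >= 0 coordinatewise (their sum w(λ1 - λ2) is dominant) and
   X_{i0}, Y_{i0} >= 1.  Since ν(g) = (w g)_{i0} and (λ1 - μ1)(g) = Σ_k (w g)_k X_k,
   sign coherence of w g squeezes ν(g) between 0 and both (λ1 - μ1)(g) and
   (μ1 - λ2)(g); all three conclusions then reduce to integer inequalities
   between minima, the strictness being witnessed by ± w⁻¹(h_{i0}). *)

From HB Require Import structures.
From mathcomp Require Import all_boot all_order all_algebra.
From mathcomp Require Import zify ring lra.
From Stdlib Require Import Classical.
Import Order.TTheory GRing.Theory Num.Theory.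
Local Open Scope ring_scope.
Set Implicit Arguments. Unset Strict Implicit. Unset Printing Implicit Defensive.

Lemma sum_delta (n : nat) (R : pzSemiRingType) (s : 'I_n) (x : R) (F : 'I_n -> R) :
  \sum_i (if i == s then x else 0) * F i = x * F s.
Proof. by rewrite (bigD1 s) //= eqxx big1 ?addr0 // => i /negbTE ->; rewrite mul0r. Qed.

Lemma sum_pair (n : nat) (R : nmodType) (s t : 'I_n) (F : 'I_n -> R) : s != t ->
  (forall i, i != s -> i != t -> F i = 0) -> \sum_i F i = F s + F t.
Proof.
move=> st F0; rewrite (bigD1 s) //= (bigD1 t) 1?eq_sym //= big1 ?addr0 //.
by move=> i /andP[ti si]; apply: F0.
Qed.

Lemma term_le_sum (n : nat) (g x : 'I_n -> int) k0 :
  (forall k, 0 <= g k) -> (forall k, 0 <= x k) -> g k0 * x k0 <= \sum_k g k * x k.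
Proof.
move=> g0 x0; rewrite (bigD1 k0) //= lerDl.
by apply: sumr_ge0 => k _; apply: mulr_ge0.
Qed.

Lemma sum_le_term (n : nat) (g x : 'I_n -> int) k0 :
  (forall k, g k <= 0) -> (forall k, 0 <= x k) -> \sum_k g k * x k <= g k0 * x k0.
Proof.
move=> g0 x0; rewrite (bigD1 k0) //= gerDl.
by apply: sumr_le0 => k _; apply: mulr_le0_ge0.
Qed.

Lemma ex_minimal (P : nat -> Prop) :
  (exists k, P k) -> exists k, P k /\ forall m, P m -> (k <= m)%N.
Proof.
move=> [k Pk]; elim: k {-2}k (leqnn k) Pk => [|N IH] k kN Pk.
  by exists k; split => // m _; move: kN; rewrite leqn0 => /eqP ->.
case: (classic (exists m, P m /\ (m < k)%N)) => [[m [Pm mk]]|noless].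
  by apply: (IH m) => //; lia.
exists k; split => // m Pm; rewrite leqNgt; apply/negP => mk.
by apply: noless; exists m.
Qed.

Section CorootAction.
Variables (n : nat) (A : 'I_n -> 'I_n -> int).
Hypothesis A_diag : forall i, A i i = 2.

(* [alpha j h] is the value α_j(h) of the simple root α_j on a coweight h,
   so that s_j(h) = h - α_j(h) h_j. *)
Definition alpha (j : 'I_n) (h : coweight n) : int := \sum_i h i * A i j.

Lemma sref_coE j h k : sref_co A j h k = h k - (if k == j then alpha j h else 0).
Proof. by rewrite ffunE. Qed.

Lemma alphaD j : {morph alpha j : g h / g + h}.
Proof.
by move=> g h; rewrite /alpha -big_split; apply: eq_bigr => i _; rewrite ffunE mulrDl.
Qed.

Lemma alphaMz j g z : alpha j (g *~ z) = alpha j g * z.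
Proof.
by rewrite /alpha mulr_suml; apply: eq_bigr => i _; rewrite ffunMzE mulrzz; ring.
Qed.

Lemma alpha_simple i j : alpha j (simple_coroot i) = A i j.
Proof.
rewrite /alpha (eq_bigr (fun k => (if k == i then 1 else 0) * A k j)) ?sum_delta ?mul1r //.
by move=> k _; rewrite ffunE.
Qed.

Lemma sref_coD j : {morph sref_co A j : g h / g + h}.
Proof.
move=> g h; apply/ffunP => k; rewrite !(sref_coE, ffunE) alphaD.
by case: (k == j); ring.
Qed.

Lemma sref_coMz j g z : sref_co A j (g *~ z) = sref_co A j g *~ z.
Proof.
apply/ffunP => k; rewrite !(sref_coE, ffunMzE) alphaMz !mulrzz.
by case: (k == j); ring.
Qed.

(* Since α_j(h_j) = 2, the simple reflection s_j negates α_j and is an involution. *)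
Lemma alpha_sref_co j h : alpha j (sref_co A j h) = - alpha j h.
Proof.
rewrite /alpha; under eq_bigr => i _ do rewrite sref_coE mulrBl.
by rewrite sumrB sum_delta A_diag; ring.
Qed.

Lemma sref_coK j : involutive (sref_co A j).
Proof.
move=> h; apply/ffunP => k; rewrite sref_coE alpha_sref_co sref_coE.
by case: (k == j); ring.
Qed.

Lemma sref_co_simple j : sref_co A j (simple_coroot j) = - simple_coroot j.
Proof.
apply/ffunP => k; rewrite sref_coE alpha_simple A_diag !ffunE.
by case: (k == j); ring.
Qed.

Lemma wact_co_cat u v h : wact_co A (u ++ v) h = wact_co A u (wact_co A v h).
Proof. by rewrite /wact_co foldr_cat. Qed.

Lemma wact_co_cons j u h : wact_co A (j :: u) h = sref_co A j (wact_co A u h).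
Proof. by []. Qed.

Lemma wact_co_rcons u j h : wact_co A (rcons u j) h = wact_co A u (sref_co A j h).
Proof. by rewrite -cats1 wact_co_cat. Qed.

Lemma wact_co_revK w : cancel (wact_co A w) (wact_co A (rev w)).
Proof.
elim: w => [//|j w IH] h.
by rewrite rev_cons wact_co_rcons wact_co_cons sref_coK IH.
Qed.

Lemma wact_co_revKV w : cancel (wact_co A (rev w)) (wact_co A w).
Proof. by move=> h; rewrite -{1}(revK w) wact_co_revK. Qed.

Lemma wact_coD w : {morph wact_co A w : g h / g + h}.
Proof. by elim: w => [//|j w IH] g h; rewrite !wact_co_cons IH sref_coD. Qed.

Lemma wact_coMz w g z : wact_co A w (g *~ z) = wact_co A w g *~ z.
Proof. by elim: w => [//|j w IH]; rewrite !wact_co_cons IH sref_coMz. Qed.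

Lemma wact_coN w g : wact_co A w (- g) = - wact_co A w g.
Proof. by rewrite -mulrN1z wact_coMz mulrN1z. Qed.

Definition weq (u v : seq 'I_n) : Prop := forall h, wact_co A u h = wact_co A v h.

Definition reduced (u : seq 'I_n) : Prop :=
  forall u', weq u' u -> (size u <= size u')%N.

Definition right_ascent (u : seq 'I_n) (j : 'I_n) : Prop :=
  forall u', weq u' (rcons u j) -> (size u <= size u')%N.

Lemma weq_sym u v : weq u v -> weq v u.
Proof. by move=> E h; rewrite E. Qed.

Lemma weq_trans u v x : weq u v -> weq v x -> weq u x.
Proof. by move=> E1 E2 h; rewrite E1 E2. Qed.

Lemma weq_catl c u v : weq u v -> weq (c ++ u) (c ++ v).
Proof. by move=> E h; rewrite !wact_co_cat E. Qed.

Lemma weq_catr c u v : weq u v -> weq (u ++ c) (v ++ c).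
Proof. by move=> E h; rewrite !wact_co_cat E. Qed.

Lemma weq_rcons u v j : weq u v -> weq (rcons u j) (rcons v j).
Proof. by rewrite -!cats1; apply: weq_catr. Qed.

Lemma weq_cancel u j v : weq (u ++ j :: j :: v) (u ++ v).
Proof. by move=> h; rewrite !wact_co_cat !wact_co_cons sref_coK. Qed.

Lemma weq_rcons2 u j : weq (rcons (rcons u j) j) u.
Proof. by move=> h; rewrite !wact_co_rcons sref_coK. Qed.

Lemma reduced_rcons u j : reduced (rcons u j) -> reduced u.
Proof.
move=> Ru u' E; have := Ru (rcons u' j) (weq_rcons j E).
by rewrite !size_rcons.
Qed.

Lemma reduced_exists u : exists2 u', weq u' u & reduced u'.
Proof.
have [k [[u' E <-] kmin]] :=
  @ex_minimal (fun k => exists2 u', weq u' u & size u' = k)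
    (ex_intro _ _ (ex_intro2 _ _ u (fun h => erefl) erefl)).
exists u' => // v Ev; apply: kmin; exists v => //; exact: weq_trans Ev E.
Qed.

End CorootAction.

(* The pairs (A s t, A t s) occurring in rank-2 Cartan matrices of finite
   type: A1 x A1, A2, B2 and G2 (the last two in both orientations). *)
Definition finite_rank2 (a b : int) : bool :=
  (a, b) \in [:: (0, 0); (-1, -1); (-1, -2); (-2, -1); (-1, -3); (-3, -1)].

Lemma finite_rank2P (a b : int) :
  a <= 0 -> b <= 0 -> (a == 0) = (b == 0) -> a * b < 4 -> finite_rank2 a b.
Proof.
move=> a0 b0 ab ab4.
have [a0b b0a] : (a = 0 -> b = 0) /\ (b = 0 -> a = 0).
  by split => /eqP E; apply/eqP; rewrite ?ab // -ab.
have : a = 0 \/ a = -1 \/ a = -2 \/ a = -3 by nia.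
case=> [Ea|[Ea|[Ea|Ea]]]; subst a; (have : b = 0 \/ b = -1 \/ b = -2 \/ b = -3 by nia);
  case=> [Eb|[Eb|[Eb|Eb]]]; subst b; try by [].
all: exfalso; first [lia | (have := a0b erefl; lia) | (have := b0a erefl; lia)].
Qed.

(* Positive definiteness of the symmetrized Cartan matrix, tested on the
   vector -a_st e_s + 2 e_t, gives a_st a_ts < 4 for s != t. *)
Lemma cartan_rank2 n (A : 'I_n -> 'I_n -> int) (hA : finite_simple_cartan A) (s t : 'I_n) :
  s != t -> finite_rank2 (A s t) (A t s).
Proof.
move=> st; case: hA => _ [A_diag A_off A_zero _ [d [d_pos d_sym d_pd]]].
apply: finite_rank2P; [exact: A_off | apply: A_off; rewrite eq_sym // | exact: A_zero |].
pose x k : rat := if k == s then - (A s t)%:~R else if k == t then 2 else 0.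
have ts : t != s by rewrite eq_sym.
have x0 i : i != s -> i != t -> x i = 0 by rewrite /x => /negbTE -> /negbTE ->.
have x_nz : exists i, x i != 0 by exists t; rewrite /x (negbTE ts) eqxx.
have := d_pd x x_nz.
rewrite (sum_pair st); last by move=> i si ti; rewrite big1 // => j _; rewrite x0 // !mul0r.
rewrite !(sum_pair st); try by move=> j sj tj; rewrite (x0 j) // mulr0.
rewrite /x eqxx (negbTE ts) eqxx !A_diag => Q_pos.
have dt := d_pos t.
have : ((A s t * A t s)%:~R : rat) < 4%:~R by rewrite intrM; nra.
by rewrite ltr_int.
Qed.

(* For a coweight
   h + X h_s + Y h_t, with p = α_s(h), q = α_t(h), a = A s t, b = A t s,
   the reflections s_s and s_t act on (X, Y) by [step_s] and [step_t]. *)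
Definition step_s (p b : int) (xy : int * int) : int * int :=
  (xy.1 - (p + 2 * xy.1 + b * xy.2), xy.2).
Definition step_t (q a : int) (xy : int * int) : int * int :=
  (xy.1, xy.2 - (q + a * xy.1 + 2 * xy.2)).

Fixpoint alt_steps (p q a b : int) (c : bool) (k : nat) (xy : int * int) : int * int :=
  if k is k'.+1 then alt_steps p q a b (~~ c) k' (if c then step_s p b xy else step_t q a xy)
  else xy.

(* The order m_st of s_s s_t in W: 2, 3, 4 or 6 for A1 x A1, A2, B2, G2. *)
Definition braid_order (a b : int) : nat :=
  if a == 0 then 2 else if a * b == 1 then 3 else if a * b == 2 then 4 else 6.

Lemma braid_order_ge2 (a b : int) : (2 <= braid_order a b)%N.
Proof. by rewrite /braid_order; repeat case: ifP. Qed.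

(* The braid relation in coordinates, checked case by case. *)
Lemma alt_steps_braid (a b : int) : finite_rank2 a b -> forall p q,
  alt_steps p q a b true (braid_order a b) (0, 0) =
  alt_steps p q a b false (braid_order a b) (0, 0).
Proof.
rewrite /finite_rank2 !inE => ab p q.
repeat (case/orP: ab => ab; [move/eqP: ab => [-> ->];
  rewrite /braid_order /= /step_s /step_t /=; congr pair; ring|]).
by move/eqP: ab => [-> ->]; rewrite /braid_order /= /step_s /step_t /=; congr pair; ring.
Qed.

Lemma alt_steps_nonneg (a b : int) : finite_rank2 a b ->
  forall k, (k < braid_order a b)%N ->
  0 <= (alt_steps 0 0 a b false k (1, 0)).1 /\ 0 <= (alt_steps 0 0 a b false k (1, 0)).2.
Proof.
rewrite /finite_rank2 !inE => ab k.
repeat (case/orP: ab => ab; [move/eqP: ab => [-> ->]; rewrite /braid_order /=;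
  do 6! (case: k => [|k]; first by vm_compute; split); by [] |]).
by move/eqP: ab => [-> ->]; rewrite /braid_order /=;
  do 6! (case: k => [|k]; first by vm_compute; split).
Qed.

Section Dihedral.
Variables (n : nat) (A : 'I_n -> 'I_n -> int).
Hypothesis A_diag : forall i, A i i = 2.
Variables s t : 'I_n.
Hypothesis st_neq : s != t.

Definition shift (h : coweight n) (X Y : int) : coweight n :=
  h + simple_coroot s *~ X + simple_coroot t *~ Y.

Lemma alpha0 j : alpha A j 0 = 0.
Proof. by rewrite /alpha big1 // => i _; rewrite ffunE mul0r. Qed.

Lemma sref_shift_s h X Y :
  sref_co A s (shift h X Y) =
  shift h (step_s (alpha A s h) (A t s) (X, Y)).1 (step_s (alpha A s h) (A t s) (X, Y)).2.
Proof.
apply/ffunP => k; rewrite /shift sref_coE !alphaD !alphaMz !alpha_simple A_diag.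
rewrite !ffunE !ffunMzE !ffunE /= !mulrzz.
by case: (eqVneq k s) => [->|_]; rewrite ?(negbTE st_neq); ring.
Qed.

Lemma sref_shift_t h X Y :
  sref_co A t (shift h X Y) =
  shift h (step_t (alpha A t h) (A s t) (X, Y)).1 (step_t (alpha A t h) (A s t) (X, Y)).2.
Proof.
apply/ffunP => k; rewrite /shift sref_coE !alphaD !alphaMz !alpha_simple A_diag.
rewrite !ffunE !ffunMzE !ffunE /= !mulrzz.
by case: (eqVneq k t) => [->|_]; rewrite ?(eq_sym t) ?(negbTE st_neq); ring.
Qed.

Definition letter (c : bool) : 'I_n := if c then s else t.

Fixpoint alt_word (c d : 'I_n) (k : nat) : seq 'I_n :=
  if k is k'.+1 then rcons (alt_word d c k') c else [::].

Lemma size_alt_word (c d : 'I_n) k : size (alt_word c d k) = k.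
Proof. by elim: k c d => [//|k IH] c d /=; rewrite size_rcons IH. Qed.

Lemma alt_word_cat c j m :
  alt_word (letter c) (letter (~~ c)) (j + m) =
  alt_word (letter (c (+) odd m)) (letter (~~ (c (+) odd m))) j
    ++ alt_word (letter c) (letter (~~ c)) m.
Proof.
elim: m c => [|m IH] c; first by rewrite addn0 addbF cats0.
rewrite addnS /=; have := IH (~~ c); rewrite negbK => ->.
by rewrite rcons_cat addNb addbN.
Qed.

Lemma wact_alt_word h c k X Y :
  let xy := alt_steps (alpha A s h) (alpha A t h) (A s t) (A t s) c k (X, Y) in
  wact_co A (alt_word (letter c) (letter (~~ c)) k) (shift h X Y) = shift h xy.1 xy.2.
Proof.
elim: k c X Y => [//|k IH] c X Y /=; rewrite wact_co_rcons -[in letter (~~ c)](negbK c).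
by case: c; [rewrite sref_shift_s | rewrite sref_shift_t]; apply: IH.
Qed.

Lemma shift0 h : shift h 0 0 = h.
Proof. by rewrite /shift !mulr0z !addr0. Qed.

Definition st_word (u : seq 'I_n) : bool := all (fun j => (j == s) || (j == t)) u.

Definition st_reduced (u : seq 'I_n) : Prop :=
  forall u', st_word u' -> weq A u' u -> (size u <= size u')%N.

Definition st_ascent (u : seq 'I_n) (j : 'I_n) : Prop :=
  forall u', st_word u' -> weq A u' (rcons u j) -> (size u <= size u')%N.

Lemma st_word_rcons u j : st_word (rcons u j) = ((j == s) || (j == t)) && st_word u.
Proof. by rewrite /st_word all_rcons. Qed.

Lemma letter_st c : (letter c == s) || (letter c == t).
Proof. by case: c; rewrite /= eqxx ?orbT. Qed.

Lemma st_word_alt c d k : st_word (alt_word (letter c) (letter d) k).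
Proof. by elim: k c d => [//|k IH] c d /=; rewrite st_word_rcons letter_st IH. Qed.

Lemma st_letter j c : (j == s) || (j == t) -> j = letter c \/ j = letter (~~ c).
Proof. by case/orP => /eqP ->; case: c; [left | right | right | left]. Qed.

Lemma st_reduced_alternating c u : st_word u -> st_reduced u ->
  last (letter c) u = letter c -> u = alt_word (letter c) (letter (~~ c)) (size u).
Proof.
elim/last_ind: u c => [//|u1 e IH] c; rewrite last_rcons st_word_rcons.
move=> /andP[_ Iu1] Ru ec; subst e; rewrite size_rcons /=; congr rcons.
have Ru1 : st_reduced u1.
  move=> u' Iu' E; have := Ru (rcons u' (letter c)).
  rewrite !size_rcons ltnS; apply; last exact: weq_rcons.
  by rewrite st_word_rcons letter_st.
have last_u1 : last (letter (~~ c)) u1 = letter (~~ c).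
  case/lastP: u1 Iu1 Ru {IH Ru1} => [//|u2 e]; rewrite last_rcons st_word_rcons.
  case/andP => /(st_letter c)[->|//] Iu2 Ru.
  have := Ru u2 Iu2 (weq_sym (weq_rcons2 A_diag _ _)).
  by rewrite !size_rcons ltnNge leqnSn.
by have := IH (~~ c) Iu1 Ru1 last_u1; rewrite negbK.
Qed.

Hypothesis st_finite : finite_rank2 (A s t) (A t s).

Let m := braid_order (A s t) (A t s).

Lemma braid_relation c :
  weq A (alt_word (letter c) (letter (~~ c)) m) (alt_word (letter (~~ c)) (letter c) m).
Proof.
have braid : weq A (alt_word s t m) (alt_word t s m).
  move=> h; rewrite -(shift0 h).
  have := wact_alt_word h true m 0 0; have := wact_alt_word h false m 0 0.
  by rewrite /= => -> ->; rewrite alt_steps_braid.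
by case: c; [apply: braid | apply: weq_sym].
Qed.

(* An alternating word longer than m_st is not {s,t}-reduced: the braid
   relation creates a square s_x s_x, which cancels. *)
Lemma braid_shorten c k : (m < k)%N ->
  exists2 u', st_word u' &
    weq A u' (alt_word (letter c) (letter (~~ c)) k) /\ size u' = (k - 2)%N.
Proof.
move=> mk; have m2 : (2 <= m)%N := braid_order_ge2 _ _.
set d := c (+) odd m.
have braid_tail : weq A (alt_word (letter c) (letter (~~ c)) m)
                        (letter d :: alt_word (letter (~~ c)) (letter c) m.-1).
  apply: (weq_trans (braid_relation c)).
  have odd_m : odd m.-1 = ~~ odd m by case: (m) m2 => [//|m'] _ /=; rewrite negbK.
  have := alt_word_cat (~~ c) 1 m.-1; rewrite add1n prednK ?(leq_trans _ m2) //.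
  by rewrite odd_m addNb addbN !negbK -/d => ->.
exists (alt_word (letter (~~ d)) (letter d) (k - m).-1 ++ alt_word (letter (~~ c)) (letter c) m.-1).
  by rewrite /st_word all_cat -!/(st_word _) !st_word_alt.
split; last by rewrite size_cat !size_alt_word; lia.
have -> : k = ((k - m).-1.+1 + m)%N by lia.
rewrite alt_word_cat -/d; apply: weq_sym; apply: (weq_trans (weq_catl _ braid_tail)).
by rewrite [alt_word _ _ _.+1]/= cat_rcons addnK; apply: weq_cancel.
Qed.

Lemma st_ascent_last u : st_word u -> st_ascent u s -> last t u = t.
Proof.
case/lastP: u => [//|u e]; rewrite last_rcons st_word_rcons.
case/andP => /(st_letter false)[//|/= es] Iu Au; subst e.
have := Au u Iu (weq_sym (weq_rcons2 A_diag _ _)).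
by rewrite size_rcons ltnn.
Qed.

Lemma dihedral_nonneg u : st_word u -> st_reduced u -> st_ascent u s ->
  exists X Y, [/\ 0 <= X, 0 <= Y &
    wact_co A u (simple_coroot s) = simple_coroot s *~ X + simple_coroot t *~ Y].
Proof.
move=> Iu Ru Au.
have uE : u = alt_word t s (size u) :=
  st_reduced_alternating (c := false) Iu Ru (st_ascent_last Iu Au).
have short : (size u < m)%N.
  rewrite ltnNge; apply/negP => long.
  have [u' Iu' [E size_u']] := braid_shorten true (k := (size u).+1) long.
  have E' : weq A u' (rcons u s) by rewrite [in rcons u _]uE; exact: E.
  have := Au u' Iu' E'; rewrite size_u'.
  by move: long (braid_order_ge2 (A s t) (A t s)); rewrite -/m; lia.
have [X0 Y0] := alt_steps_nonneg st_finite short.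
have := wact_alt_word 0 false (size u) 1 0; rewrite /= -uE !alpha0.
set xy := alt_steps _ _ _ _ _ _ _ => u_hs.
exists xy.1, xy.2; split => //.
have hs : simple_coroot s = shift 0 1 0 by rewrite /shift mulr1z mulr0z add0r addr0.
by rewrite {1}hs u_hs /shift add0r.
Qed.
End Dihedral.

Section AscentNonneg.
Variables (n : nat) (A : 'I_n -> 'I_n -> int).
Hypothesis A_diag : forall i, A i i = 2.
Hypothesis A_rank2 : forall s t : 'I_n, s != t -> finite_rank2 (A s t) (A t s).

Definition st_factor (s t : 'I_n) (x v u : seq 'I_n) : Prop :=
  [/\ reduced A v, st_word s t u, weq A (v ++ u) x & (size v + size u = size x)%N].

(* In a factorization with v of minimal length, v has ascents at s and at t:
   otherwise a letter could be moved from v into u. *)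
Lemma min_factor_ascent s t x v u r : reduced A x -> st_factor s t x v u ->
  (forall v' u', st_factor s t x v' u' -> (size v <= size v')%N) ->
  (r == s) || (r == t) -> right_ascent A v r.
Proof.
move=> Rx [Rv Iu Evu Svu] vmin rst v' E; rewrite leqNgt; apply/negP => short.
have [v'' E'' R''] := reduced_exists A v'.
have S'' := R'' v' (weq_sym E'').
have E3 : weq A (v'' ++ r :: u) x.
  apply: (weq_trans (weq_catr _ E'')); apply: (weq_trans (weq_catr _ E)).
  by rewrite cat_rcons; apply: (weq_trans (weq_cancel A_diag v r u)).
have F'' : st_factor s t x v'' (r :: u).
  split => //; first by rewrite /st_word /= rst.
  by have := Rx _ E3; rewrite size_cat /=; lia.
by have := vmin _ _ F''; lia.
Qed.

Lemma st_factor_reduced s t x v u : reduced A x -> st_factor s t x v u -> st_reduced A s t u.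
Proof.
move=> Rx [_ _ Evu Svu] u' _ E; have := Rx (v ++ u') (weq_trans (weq_catl _ E) Evu).
by rewrite size_cat; lia.
Qed.

Lemma st_factor_ascent s t x v u : right_ascent A x s -> st_factor s t x v u ->
  st_ascent A s t u s.
Proof.
move=> Ax [_ _ Evu Svu] u' _ E.
have E' : weq A (v ++ u') (rcons x s).
  apply: (weq_trans (weq_catl _ E)); rewrite -rcons_cat; exact: weq_rcons.
by have := Ax _ E'; rewrite size_cat; lia.
Qed.

(* Humphreys' key lemma: if l(x s) > l(x) then x(h_s) >= 0.  By induction on
   l(x): write x = x1 t with t != s, factor x = v u with u in W_{s,t} and v
   minimal; then v(h_s), v(h_t) >= 0 by induction and u(h_s) is a
   nonnegative combination of h_s, h_t by the rank-2 case. *)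
Lemma ascent_nonneg N : forall x s, reduced A x -> size x = N -> right_ascent A x s ->
  forall k, 0 <= wact_co A x (simple_coroot s) k.
Proof.
elim/ltn_ind: N => N IHN x s Rx Sx Ax.
case/lastP: x Rx Sx Ax => [|x1 t] Rx Sx Ax.
  by move=> k; rewrite ffunE; case: (k == s).
have ts : t != s.
  apply/eqP => ets; subst t; have := Ax x1 (weq_sym (weq_rcons2 A_diag _ _)).
  by rewrite size_rcons ltnn.
have st : s != t by rewrite eq_sym.
have F0 : st_factor s t (rcons x1 t) x1 [:: t].
  split; [exact: reduced_rcons Rx | by rewrite /st_word /= eqxx orbT | by rewrite cats1 |].
  by rewrite size_rcons addn1.
have [k [[v [u [Fvu <-]]] vmin]] :=
  @ex_minimal (fun k => exists v u, st_factor s t (rcons x1 t) v u /\ size v = k)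
    (ex_intro _ _ (ex_intro _ x1 (ex_intro _ [:: t] (conj F0 erefl)))).
have vmin' v' u' : st_factor s t (rcons x1 t) v' u' -> (size v <= size v')%N.
  by move=> F'; apply: vmin; exists v', u'.
have v_short : (size v < N)%N.
  by have := vmin' _ _ F0; rewrite -Sx size_rcons; lia.
have [Rv Iu Evu _] := Fvu.
have s_st : (s == s) || (s == t) by rewrite eqxx.
have t_st : (t == s) || (t == t) by rewrite eqxx orbT.
have v_hs := IHN _ v_short v s Rv erefl (min_factor_ascent Rx Fvu vmin' s_st).
have v_ht := IHN _ v_short v t Rv erefl (min_factor_ascent Rx Fvu vmin' t_st).
have [X [Y [X0 Y0 u_hs]]] :=
  dihedral_nonneg A_diag st (A_rank2 st) Iu (st_factor_reduced Rx Fvu) (st_factor_ascent Ax Fvu).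
move=> j; rewrite -(Evu (simple_coroot s)) wact_co_cat u_hs wact_coD !wact_coMz.
by rewrite !ffunE !ffunMzE !mulrzz addr_ge0 ?mulr_ge0.
Qed.

(* Sign coherence: every x(h_j) has all coordinates >= 0 or all <= 0.  Take
   x reduced; if l(x s_j) > l(x) use [ascent_nonneg], otherwise x = y s_j
   with l(y s_j) > l(y) and x(h_j) = - y(h_j). *)
Lemma sign_coherent x j : (forall k, 0 <= wact_co A x (simple_coroot j) k) \/
                          (forall k, wact_co A x (simple_coroot j) k <= 0).
Proof.
have [w Ew Rw] := reduced_exists A x; rewrite -Ew.
case: (classic (exists2 w', weq A w' (rcons w j) & (size w' < size w)%N)) =>
  [[w' Ew' short] | no_short]; last first.
  left; apply: (ascent_nonneg Rw erefl) => w' Ew'; rewrite leqNgt; apply/negP => short.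
  by apply: no_short; exists w'.
have [y Ey Ry] := reduced_exists A w'.
have w_yj : weq A (rcons y j) w.
  apply: (weq_trans (weq_rcons j Ey)); apply: (weq_trans (weq_rcons j Ew')).
  exact: weq_rcons2.
have y_hj : forall k, 0 <= wact_co A y (simple_coroot j) k.
  apply: (ascent_nonneg Ry erefl) => y' Ey'.
  have := Rw y' (weq_trans Ey' w_yj); have := Ry w' (weq_sym Ey); lia.
right => k; rewrite -(w_yj (simple_coroot j)) wact_co_rcons sref_co_simple // wact_coN ffunE.
by rewrite oppr_le0.
Qed.
End AscentNonneg.

Definition orbit_coroot n (A : 'I_n -> 'I_n -> int) (g : coweight n) : Prop :=
  exists x j, g = wact_co A x (simple_coroot j).

Lemma orbit_pos_coroot n (A : 'I_n -> 'I_n -> int) (hA : finite_simple_cartan A) g :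
  orbit_coroot A g -> pos_coroot A g \/ pos_coroot A (- g).
Proof.
move=> [x [j ->]]; have A_diag : forall i, A i i = 2 by case: hA => _ [].
case: (sign_coherent A_diag (cartan_rank2 hA) x j) => sgn; [left | right]; split.
- by exists x, j.
- exact: sgn.
- by exists (rcons x j), j; rewrite wact_co_rcons sref_co_simple // wact_coN.
- by move=> k; rewrite ffunE oppr_ge0.
Qed.

Section Pairing.
Variables (n : nat) (A : 'I_n -> 'I_n -> int).

Lemma pairing_sref j (lam : weight n) (h : coweight n) :
  pairing (sref A j lam) h = pairing lam (sref_co A j h).
Proof.
rewrite /pairing; under eq_bigr => i _ do rewrite ffunE mulrBr.
under [in RHS]eq_bigr => i _ do rewrite ffunE mulrBl.
rewrite !sumrB; congr (_ - _).
by rewrite sum_delta mulr_suml; apply: eq_bigr => i _; ring.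
Qed.

Lemma pairing_wact w (lam : weight n) (h : coweight n) :
  pairing (wact A w lam) h = pairing lam (wact_co A (rev w) h).
Proof.
elim: w h => [//|j w IH] h.
by rewrite /= pairing_sref IH rev_cons wact_co_rcons.
Qed.

Lemma pairing_simple (lam : weight n) i : pairing lam (simple_coroot i) = lam i.
Proof.
rewrite /pairing (eq_bigr (fun k => (if k == i then 1 else 0) * lam k)) ?sum_delta ?mul1r //.
by move=> k _; rewrite ffunE.
Qed.

Lemma pairing_fund i (h : coweight n) : pairing (fund_weight i) h = h i.
Proof.
rewrite /pairing (eq_bigr (fun k => (if k == i then 1 else 0) * h k)) ?sum_delta ?mul1r //.
by move=> k _; rewrite ffunE mulrC.
Qed.

Lemma pairingD (l1 l2 : weight n) h : pairing (l1 + l2) h = pairing l1 h + pairing l2 h.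
Proof. by rewrite /pairing -big_split; apply: eq_bigr => i _; rewrite ffunE mulrDr. Qed.

Lemma pairingB (l1 l2 : weight n) h : pairing (l1 - l2) h = pairing l1 h - pairing l2 h.
Proof. by rewrite /pairing -sumrB; apply: eq_bigr => i _; rewrite !ffunE mulrBr. Qed.

Lemma pairingN (l : weight n) (h : coweight n) : pairing l (- h) = - pairing l h.
Proof. by rewrite /pairing -sumrN; apply: eq_bigr => i _; rewrite ffunE mulNr. Qed.
End Pairing.

Lemma min_cases (x y : int) :
  (Num.min x y = x /\ x <= y) \/ (Num.min x y = y /\ y <= x).
Proof. by case: (leP x y) => xy; [left | right; split => //; exact: ltW]. Qed.

Lemma min_between (a b c : int) :
  Num.min a b <= Num.min c (a + b - c) -> 0 <= (a - c) * (c - b).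
Proof.
by case: (min_cases a b) => -[-> ?]; case: (min_cases c (a + b - c)) => -[-> ?]; nia.
Qed.

Definition squeezed (C x y : int) : Prop :=
  (0 <= C /\ C <= x /\ C <= y) \/ (C <= 0 /\ x <= C /\ y <= C).

Lemma squeezed_nonneg (a b c C : int) : squeezed C (a - c) (c - b) ->
  0 <= a -> 0 <= b -> 0 <= a - C /\ 0 <= b + C.
Proof. by rewrite /squeezed; lia. Qed.

Lemma squeezed_min (a b c C : int) : squeezed C (a - c) (c - b) ->
  Num.min a b <= Num.min (a - C) (b + C) /\ Num.min (a - C) (b + C) <= Num.min c (a + b - c).
Proof.
rewrite /squeezed => sq.
case: (min_cases a b) => -[-> ?]; case: (min_cases (a - C) (b + C)) => -[-> ?];
  case: (min_cases c (a + b - c)) => -[-> ?]; lia.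
Qed.

Lemma min_shift_neq (a b : int) : 2 <= a - b ->
  Num.min a b != Num.min (a - 1) (b + 1) /\ Num.min (- a) (- b) != Num.min (- a + 1) (- b - 1).
Proof.
move=> gap; split; apply/eqP.
  by case: (min_cases a b) => -[-> ?]; case: (min_cases (a - 1) (b + 1)) => -[-> ?]; lia.
by case: (min_cases (- a) (- b)) => -[-> ?]; case: (min_cases (- a + 1) (- b - 1)) => -[-> ?]; lia.
Qed.

(* Standing assumptions of Proposition 5.4; [sum_eq] and [lam_le_mu] are
   what remains of (λ1, λ2), (μ1, μ2) ∈ P^+(λ, 2) and λ ≺ μ. *)
Section Proposition.
Variables (n : nat) (A : 'I_n -> 'I_n -> int).
Hypothesis hA : finite_simple_cartan A.
Variables (lam1 lam2 mu1 mu2 : weight n) (w : seq 'I_n) (i0 : 'I_n).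
Hypothesis sum_eq : lam1 + lam2 = mu1 + mu2.
Hypothesis lam_le_mu : preceq A (lam1, lam2) (mu1, mu2).
Hypothesis w_dom : dominant (wact A w (lam1 - lam2)).
Hypothesis i0_pos : 0 < wact A w (lam1 - mu1) i0 * wact A w (mu1 - lam2) i0.

Let A_diag : forall i, A i i = 2. Proof. by case: hA => _ []. Qed.

Let nu := wact A (rev w) (fund_weight i0).

Lemma pairing_nu g : pairing nu g = wact_co A w g i0.
Proof. by rewrite /nu pairing_wact revK pairing_fund. Qed.

Lemma pairing_mu2 g : pairing mu2 g = pairing lam1 g + pairing lam2 g - pairing mu1 g.
Proof.
have := congr1 (fun l : weight n => pairing l g) sum_eq; rewrite /= !pairingD => ->.
by rewrite addrC addKr.
Qed.

Lemma wact_coord (lam : weight n) j :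
  wact A w lam j = pairing lam (wact_co A (rev w) (simple_coroot j)).
Proof. by rewrite -pairing_simple pairing_wact. Qed.

Lemma mu1_between g : orbit_coroot A g ->
  0 <= (pairing lam1 g - pairing mu1 g) * (pairing mu1 g - pairing lam2 g).
Proof.
move=> orb_g; case: (orbit_pos_coroot hA orb_g) => /lam_le_mu;
  by rewrite /minpair /= pairing_mu2 ?pairingN => /min_between; nia.
Qed.

(* Hence all coordinates of w(λ1 - μ1) and w(μ1 - λ2) are nonnegative, since
   their sums w(λ1 - λ2) are. *)
Lemma w_diff_nonneg j : 0 <= wact A w (lam1 - mu1) j /\ 0 <= wact A w (mu1 - lam2) j.
Proof.
have := @mu1_between _ (ex_intro _ (rev w) (ex_intro _ j erefl)); have := w_dom j.
rewrite !wact_coord !pairingB.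
move: (pairing lam1 _) (pairing lam2 _) (pairing mu1 _) => a b c; nia.
Qed.

(* Key estimate: by sign coherence of w g, ν(g) = (w g)_{i0} is squeezed
   between 0 and the sums (λ1 - μ1)(g) = Σ_k (w g)_k w(λ1 - μ1)_k and
   (μ1 - λ2)(g), because w(λ1 - μ1)_{i0}, w(μ1 - λ2)_{i0} >= 1. *)
Lemma nu_squeezed g : orbit_coroot A g ->
  squeezed (pairing nu g) (pairing lam1 g - pairing mu1 g) (pairing mu1 g - pairing lam2 g).
Proof.
move=> [x [j g_def]]; set g' := wact_co A w g.
have pairing_g (lam : weight n) : pairing lam g = \sum_k g' k * wact A w lam k.
  by rewrite -[g](wact_co_revK A_diag w) -pairing_wact.
rewrite pairing_nu -/g' -!pairingB !pairing_g.
have [X0 Y0] := w_diff_nonneg i0.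
have [X1 Y1] : 1 <= wact A w (lam1 - mu1) i0 /\ 1 <= wact A w (mu1 - lam2) i0.
  by move: i0_pos; nia.
have Xk k := proj1 (w_diff_nonneg k); have Yk k := proj2 (w_diff_nonneg k).
have g'E : g' = wact_co A (w ++ x) (simple_coroot j) by rewrite wact_co_cat -g_def.
case: (sign_coherent A_diag (cartan_rank2 hA) (w ++ x) j); rewrite -g'E => sgn.
- have := term_le_sum i0 sgn Xk; have := term_le_sum i0 sgn Yk; have := sgn i0.
  by rewrite /squeezed; nia.
- have := sum_le_term i0 sgn Xk; have := sum_le_term i0 sgn Yk; have := sgn i0.
  by rewrite /squeezed; nia.
Qed.

Lemma shifted_inP2 lam : inP2 lam (lam1, lam2) -> inP2 lam (lam1 - nu, lam2 + nu).
Proof.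
case=> /= dom1 dom2 sum12.
have orb_i i : orbit_coroot A (simple_coroot i) by exists [::], i.
have nonneg i : 0 <= lam1 i - nu i /\ 0 <= lam2 i + nu i.
  have := nu_squeezed (orb_i i); rewrite !pairing_simple => sq.
  exact: squeezed_nonneg sq (dom1 i) (dom2 i).
split => [i | i | /=]; rewrite ?ffunE.
- by case: (nonneg i).
- by case: (nonneg i).
- by rewrite -sum12 addrACA addNr addr0.
Qed.

Lemma shifted_above : preceq A (lam1, lam2) (lam1 - nu, lam2 + nu).
Proof.
move=> h [orb_h _]; have [le _] := squeezed_min (nu_squeezed orb_h).
by rewrite /minpair /= pairingB pairingD.
Qed.

Lemma shifted_below : preceq A (lam1 - nu, lam2 + nu) (mu1, mu2).
Proof.
move=> h [orb_h _]; have [_ le] := squeezed_min (nu_squeezed orb_h).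
by rewrite /minpair /= pairingB pairingD pairing_mu2.
Qed.

(* The pairs differ on ± w⁻¹(h_{i0}), where ν takes the value ±1. *)
Lemma shifted_not_sim : ~ simeq A (lam1, lam2) (lam1 - nu, lam2 + nu).
Proof.
move=> sim; set g0 := wact_co A (rev w) (simple_coroot i0).
have nu_g0 : pairing nu g0 = 1 by rewrite pairing_nu /g0 wact_co_revKV // ffunE eqxx.
have gap : 2 <= pairing lam1 g0 - pairing lam2 g0.
  have := i0_pos; have := w_diff_nonneg i0; rewrite !wact_coord !pairingB -/g0; nia.
have [ne_pos ne_neg] := min_shift_neq gap.
have orb_g0 : orbit_coroot A g0 by exists (rev w), i0.
case: (orbit_pos_coroot hA orb_g0) => /sim; rewrite /minpair /= -/g0 pairingB pairingD.
- by rewrite nu_g0 => /eqP; rewrite (negbTE ne_pos).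
- by rewrite !pairingN nu_g0 opprK => /eqP; rewrite (negbTE ne_neg).
Qed.
End Proposition.

Theorem proposition5p4 (n : nat) (A : 'I_n -> 'I_n -> int)
  (hA : finite_simple_cartan A)
  (lam lam1 lam2 mu1 mu2 : weight n)
  (hlam : dominant lam)
  (hl : inP2 lam (lam1, lam2)) (hm : inP2 lam (mu1, mu2))
  (hprec : prec A (lam1, lam2) (mu1, mu2))
  (w : seq 'I_n) (i0 : 'I_n)
  (hw : dominant (wact A w (lam1 - lam2)))
  (hpos : 0 < wact A w (lam1 - mu1) i0 * wact A w (mu1 - lam2) i0) :
  inP2 lam (lam1 - wact A (rev w) (fund_weight i0),
            lam2 + wact A (rev w) (fund_weight i0))
  /\ prec A (lam1, lam2) (lam1 - wact A (rev w) (fund_weight i0),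
                          lam2 + wact A (rev w) (fund_weight i0))
  /\ preceq A (lam1 - wact A (rev w) (fund_weight i0),
               lam2 + wact A (rev w) (fund_weight i0)) (mu1, mu2).
Proof.
have sum_eq : lam1 + lam2 = mu1 + mu2 by case: hl => _ _ ->; case: hm => _ _ ->.
have [lam_le_mu _] := hprec.
split; [| split; [split |]].
- exact: (shifted_inP2 hA sum_eq lam_le_mu hw hpos).
- exact: (shifted_above hA sum_eq lam_le_mu hw hpos).
- exact: (shifted_not_sim hA sum_eq lam_le_mu hw hpos).
- exact: (shifted_below hA sum_eq lam_le_mu hw hpos).
Qed.
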